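(* Let $n$ be an integer with $2^{k_n-1}<n<2^{k_n}$, where $k_n=\lceil\log_2 n\rceil$, and let $T_n^{gfb}=(T_a,T_b)$ be the GFB tree on $n$ leaves, so that $(n_a,n_b)=(n-2^{k_n-2},2^{k_n-2})$ if $n\in(2^{k_n-1},3\cdot2^{k_n-2})$; $(n_a,n_b)=(2^{k_n-1},2^{k_n-2})$ if $n=3\cdot 2^{k_n-2}$; $(n_a,n_b)=(2^{k_n-1},n-2^{k_n-1})$ if $n\in(3\cdot2^{k_n-2},2^{k_n})$. Suppose $\widehat T=(\widehat T_a,\widehat T_b)$ is a rooted binary tree on $n$ leaves whose maximal pending subtrees have $\widehat n_a,\widehat n_b$ leaves with $(\widehat n_a,\widehat n_b)=(n-2^{k_n-2}+j,\,2^{k_n-2}-j)$ with $j\in\{1,\dots,2^{k_n-2}-1\}$ if $n\in(2^{k_n-1},3\cdot2^{k_n-2})$; $(\widehat n_a,\widehat n_b)=(2^{k_n-1}+j,\,2^{k_n-2}-j)$ with $j\in\{1,\dots,2^{k_n-2}-1\}$ if $n=3\cdot2^{k_n-2}$; $(\widehat n_a,\widehat n_b)=(2^{k_n-1}+j,\,n-2^{k_n-1}-j)$ with $j\in\{1,\dots,n-2^{k_n-1}-1\}$ if $n\in(3\cdot2^{k_n-2},2^{k_n})$. Then $c_n=\mathcal{C}(T_n^{gfb})<\mathcal{C}(\widehat T)$; in particular $\widehat T$ does not have minimal Colless index.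
   Context: A rooted binary tree with $n\geq 2$ leaves is a rooted tree whose root has degree 2 and all other internal nodes have degree 3; for $n=1$ it is a single node. Trees are considered up to isomorphism. Every rooted binary tree $T$ with $n\geq2$ leaves decomposes as $T=(T_a,T_b)$ where $T_a,T_b$ are the subtrees rooted at the two children of the root (maximal pending subtrees), with $n_a\geq n_b$ leaves respectively. For an internal node $v$ with children $v_1,v_2$, let $\kappa(v_i)$ be the number of leaves descending from $v_i$ ($1$ if a leaf). The Colless index is $\mathcal{C}(T)=\sum_v|\kappa(v_1)-\kappa(v_2)|$ over internal nodes $v$; $c_n$ is the minimum of $\mathcal{C}$ over rooted binary trees with $n$ leaves. The GFB tree $T_n^{gfb}$ is the output of: start with $n$ single-node trees; while more than one tree remains, remove a tree $u$ of minimal size (number of leaves), then remove a tree $v$ of minimal size among the remaining ones, and insert the tree with a new root whose children are the roots of $u$ and $v$; output the remaining tree. *)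

From mathcomp Require Import all_boot.
Set Implicit Arguments. Unset Strict Implicit. Unset Printing Implicit Defensive.

(* Rooted binary trees: a leaf, or a root with two children.
   Isomorphism (swapping children) does not affect leaf counts or Colless index. *)
Inductive tree : Type := Leaf | Node of tree & tree.

Fixpoint leaves (t : tree) : nat :=
  match t with Leaf => 1 | Node l r => leaves l + leaves r end.

Definition absdiff (a b : nat) : nat := (a - b) + (b - a).

Fixpoint colless (t : tree) : nat :=
  match t with
  | Leaf => 0
  | Node l r => absdiff (leaves l) (leaves r) + colless l + colless r
  end.

Definition is_min_colless (n c : nat) : Prop :=
  (exists t, leaves t = n /\ colless t = c) /\
  (forall t, leaves t = n -> c <= colless t).

(* GFB algorithm: keep the forest sorted by size (stable sort), remove the
   first (a minimal-size tree u) and then the next (a minimal-size tree v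
   among the remaining ones), and insert Node u v. *)
Definition size_le (a b : tree) : bool := leaves a <= leaves b.

Fixpoint gfb_loop (fuel : nat) (s : seq tree) : tree :=
  match fuel with
  | 0 => head Leaf s
  | f.+1 =>
      match sort size_le s with
      | u :: v :: r => gfb_loop f (Node u v :: r)
      | [:: x] => x
      | [::] => Leaf
      end
  end.

(* n - 1 merges are needed; fuel n suffices *)
Definition gfb (n : nat) : tree := gfb_loop n (nseq n Leaf).

From mathcomp Require Import all_boot zify.

(* The minimum Colless index obeys c_n = c_(ceil(n/2)) + c_(floor(n/2)) + (n mod 2).
   Write excess x y := |x - y| + c_x + c_y - c_(x+y) for the cost of a root split
   (x, y) beyond the optimum.  Halving x and y pairs their halves into a balanced
   split of x + y, and the excess of (x, y) dominates the excesses of the two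
   halved pairs; so excesses are nonnegative, and, when 2^i <= x + y <= 2^(i+1),
   they are positive unless x and y both lie in [2^(i-1), 2^i]: if the halved
   pairs were all balanced at the level below, x and y would be balanced too.
   The GFB forest keeps all sizes in some [2^i, 2^(i+1)] with at most one of them
   not a power of two, and merging a power of two with such a size has excess 0,
   so GFB is optimal.  The rival trees of the theorem have a maximal pending
   subtree of size outside [2^(k-2), 2^(k-1)], hence positive excess. *)

Fixpoint cmin_fuel (fuel n : nat) : nat :=
  if fuel is fuel'.+1 then
    if n <= 1 then 0
    else cmin_fuel fuel' (uphalf n) + cmin_fuel fuel' n./2 + odd n
  else 0.

(* Fuel n suffices since both halves of n > 1 are smaller than n. *)
Definition cmin (n : nat) : nat := cmin_fuel n n.

Definition cmin_split (x y : nat) : nat := absdiff x y + cmin x + cmin y.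

Lemma cmin_fuel_stable fuel1 fuel2 n :
  n <= fuel1 -> n <= fuel2 -> cmin_fuel fuel1 n = cmin_fuel fuel2 n.
Proof.
elim: fuel1 fuel2 n => [|fuel1 IH] [|fuel2] [|n] //= n_le1 n_le2.
case: ifP => // n_gt1; rewrite !(IH fuel2) //; lia.
Qed.

Lemma cmin_rec n : 1 < n -> cmin n = cmin (uphalf n) + cmin n./2 + odd n.
Proof.
case: n => [|n] // n_gt1; rewrite {1}/cmin /= ifF; last by lia.
by congr (_ + _ + _); apply: cmin_fuel_stable; lia.
Qed.

Lemma cmin_splitC x y : cmin_split x y = cmin_split y x.
Proof. by rewrite /cmin_split /absdiff; lia. Qed.

Lemma cmin_balanced u v :
  1 < u + v -> absdiff u v <= 1 -> cmin (u + v) = cmin_split u v.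
Proof.
rewrite /cmin_split /absdiff => uv_gt1 uv_le1; rewrite cmin_rec //.
have [[-> ->] | [-> ->]] : (uphalf (u + v) = u /\ (u + v)./2 = v)
                        \/ (uphalf (u + v) = v /\ (u + v)./2 = u) by lia.
all: lia.
Qed.

Lemma cmin_pow2 i : cmin (2 ^ i) = 0.
Proof.
elim: i => // i IH; have := expn_gt0 2 i.
by rewrite expnS mul2n -addnn cmin_balanced /cmin_split /absdiff ?IH; lia.
Qed.

Lemma cmin_add_pow2 i s t : 2 ^ i <= s <= 2 ^ i.+1 -> t \in [:: 2 ^ i; 2 ^ i.+1] ->
  cmin (s + t) = cmin_split s t.
Proof.
elim: i => [|i IH] in s t * => s_range.
  rewrite expn0 expn1 !inE in s_range *.
  by case/orP=> /eqP->; have [->|->] : s = 1 \/ s = 2 by lia.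
rewrite !inE => t_pow.
have e1 : 2 ^ i.+1 = 2 * 2 ^ i := expnS 2 i.
have e2 : 2 ^ i.+2 = 2 * 2 ^ i.+1 := expnS 2 i.+1.
have [cmin_t cmin_t_half] : cmin t = 0 /\ cmin t./2 = 0.
  case/orP: t_pow => /eqP->.
    by rewrite (_ : _./2 = 2 ^ i) ?cmin_pow2 //; lia.
  by rewrite (_ : _./2 = 2 ^ i.+1) ?cmin_pow2 //; lia.
have -> : s + t = (uphalf s + t./2) + (s./2 + t./2) by lia.
rewrite cmin_balanced /absdiff; try lia.
rewrite /cmin_split !IH ?inE; try lia.
by rewrite [cmin s]cmin_rec /cmin_split /absdiff ?cmin_t ?cmin_t_half; lia.
Qed.

(* The split (x, 1) has to be treated apart: halving 1 leaves an empty half. *)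
Lemma cmin_succ_split x : 0 < x -> cmin x.+1 + (2 < x) <= cmin_split x 1.
Proof.
elim/ltn_ind: x => x IH x_gt0.
case: (ltnP 2 x) => [x_gt2 | x_le2]; last first.
  by have [->|->] : x = 1 \/ x = 2 by lia.
have -> : x.+1 = uphalf x + (x./2).+1 by lia.
rewrite cmin_balanced /absdiff; try lia.
have := IH x./2 ltac:(lia) ltac:(lia).
by rewrite /cmin_split /absdiff [cmin x]cmin_rec; lia.
Qed.

(* excess x y >= excess (uphalf x) y./2 + excess x./2 (uphalf y), kept subtraction-free. *)
Lemma cmin_split_halves x y : 1 < y <= x ->
  cmin (x + y) + cmin_split (uphalf x) y./2 + cmin_split x./2 (uphalf y)
  <= cmin_split x y + cmin (uphalf x + y./2) + cmin (x./2 + uphalf y).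
Proof.
move=> yx.
have -> : x + y = (uphalf x + y./2) + (x./2 + uphalf y) by lia.
rewrite cmin_balanced /absdiff; try lia.
have := cmin_rec x ltac:(lia); have := cmin_rec y ltac:(lia).
by rewrite /cmin_split /absdiff; lia.
Qed.

Lemma cmin_le_split x y : cmin (x + y) <= cmin_split x y.
Proof.
have [n] := ubnP (x + y); elim: n x y => // n IH x y /ltnSE xy_le_n.
wlog yx : x y xy_le_n / y <= x.
  move=> hwlog; case: (leqP y x) => [|/ltnW]; first exact: hwlog.
  by rewrite addnC cmin_splitC; apply: hwlog; lia.
case: y yx xy_le_n => [|[|y]] yx xy_le_n.
- by rewrite addn0 /cmin_split; lia.
- by have := cmin_succ_split x ltac:(lia); rewrite addn1; lia.
have := cmin_split_halves x y.+2 ltac:(lia).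
have := IH (uphalf x) (y.+2)./2 ltac:(lia).
have := IH x./2 (uphalf y.+2) ltac:(lia).
lia.
Qed.

Definition upper_half (P x : nat) : bool := P <= 2 * x <= 2 * P.

Lemma cmin_lt_split i x y : 0 < x -> 0 < y -> 2 ^ i <= x + y <= 2 ^ i.+1 ->
  ~~ (upper_half (2 ^ i) x && upper_half (2 ^ i) y) -> cmin (x + y) < cmin_split x y.
Proof.
elim: i => [|i IH] in x y *.
  by rewrite /upper_half expn0 expn1; lia.
have e1 : 2 ^ i.+1 = 2 * 2 ^ i := expnS 2 i.
have e2 : 2 ^ i.+2 = 2 * 2 ^ i.+1 := expnS 2 i.+1.
wlog yx : x y / y <= x.
  move=> hwlog; case: (leqP y x) => [|/ltnW xy]; first exact: hwlog.
  rewrite [x + y]addnC [_ && upper_half _ y]andbC cmin_splitC => x_gt0 y_gt0.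
  exact: hwlog.
move=> x_gt0 y_gt0 xy unbal.
case: (ltnP 1 y) => [y_gt1 | y_le1].
  have halves := cmin_split_halves x y ltac:(lia).
  have [sub1 | sub2] : ~~ (upper_half (2 ^ i) (uphalf x) && upper_half (2 ^ i) y./2)
                    \/ ~~ (upper_half (2 ^ i) x./2 && upper_half (2 ^ i) (uphalf y)).
    by move: unbal; rewrite /upper_half; lia.
  + have := IH (uphalf x) y./2 ltac:(lia) ltac:(lia) ltac:(lia) sub1.
    have := cmin_le_split x./2 (uphalf y); lia.
  + have := IH x./2 (uphalf y) ltac:(lia) ltac:(lia) ltac:(lia) sub2.
    have := cmin_le_split (uphalf x) y./2; lia.
have y1 : y = 1 by lia.
have := cmin_succ_split x ltac:(lia).
by move: unbal xy; rewrite /upper_half y1 addn1; lia.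
Qed.

Lemma colless_ge_cmin t : cmin (leaves t) <= colless t.
Proof.
elim: t => //= l IHl r IHr.
by have := cmin_le_split (leaves l) (leaves r); rewrite /cmin_split; lia.
Qed.

Lemma leaves_gt0 t : 0 < leaves t.
Proof. by elim: t => //= l IHl r IHr; rewrite addn_gt0 IHl. Qed.

Definition dyadic_profile (i : nat) (s : seq nat) : bool :=
  all (fun x => 2 ^ i <= x <= 2 ^ i.+1) s &&
  (count (fun x => 2 ^ i < x < 2 ^ i.+1) s <= 1).

Lemma perm_dyadic_profile i s1 s2 :
  perm_eq s1 s2 -> dyadic_profile i s1 = dyadic_profile i s2.
Proof. by move=> s12; rewrite /dyadic_profile (perm_all _ s12) (permP s12). Qed.

Lemma cmin_merge_profile i a b r :
  dyadic_profile i [:: a, b & r] -> cmin (a + b) = cmin_split a b.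
Proof.
case/andP=> /and3P[a_range b_range _] /= count_le1.
have [a_pow | b_pow] : a \in [:: 2 ^ i; 2 ^ i.+1] \/ b \in [:: 2 ^ i; 2 ^ i.+1].
  by rewrite !inE; lia.
- by rewrite addnC cmin_splitC; apply: (cmin_add_pow2 i).
- exact: (cmin_add_pow2 i).
Qed.

Lemma dyadic_profile_merge i a b r :
  sorted leq [:: a, b & r] -> dyadic_profile i [:: a, b & r] ->
  dyadic_profile (if a + b <= 2 ^ i.+1 then i else i.+1) ((a + b) :: r).
Proof.
rewrite /dyadic_profile /= => /andP[ab /(order_path_min leq_trans) b_le_r].
case/andP=> /and3P[a_range b_range r_range] count_le1.
have e1 : 2 ^ i.+1 = 2 * 2 ^ i := expnS 2 i.
have e2 : 2 ^ i.+2 = 2 * 2 ^ i.+1 := expnS 2 i.+1.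
case: (leqP (a + b) (2 ^ i.+1)) => ab_sum.
  by rewrite r_range andbT; lia.
have r_top : {in r, forall x, x = 2 ^ i.+1}.
  move=> x xr; have := allP b_le_r x xr; have := allP r_range x xr.
  by rewrite (permP (perm_to_rem xr)) /= in count_le1; lia.
have count_r : count (fun x => 2 ^ i.+1 < x < 2 ^ i.+2) r = 0.
  by apply/eqP; rewrite -leqn0 leqNgt -has_count; apply/hasPn => x /r_top ->; lia.
rewrite count_r addn0 andbC leq_b1 /=; apply/andP; split; first lia.
by apply/allP => x /r_top ->; lia.
Qed.

Definition optimal (t : tree) : bool := colless t == cmin (leaves t).

Lemma gfb_loop_spec fuel s i :
  0 < size s <= fuel.+1 -> all optimal s -> dyadic_profile i (map leaves s) ->
  optimal (gfb_loop fuel s) && (leaves (gfb_loop fuel s) == sumn (map leaves s)).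
Proof.
elim: fuel => [|fuel IH] in s i *.
  by case: s => [|t []] //= _ /andP[-> _] _; rewrite addn0 eqxx.
move=> size_s opt_s prof_s /=.
have perm_s : perm_eq (map leaves (sort size_le s)) (map leaves s).
  by rewrite -sort_map perm_sort.
have sorted_s : sorted size_le (sort size_le s).
  by apply: sort_sorted => u v; apply: leq_total.
have opt_sort : all optimal (sort size_le s).
  by rewrite all_count count_sort size_sort -all_count.
rewrite -(perm_sumn perm_s); move: opt_sort sorted_s (size_sort size_le s).
move: (perm_dyadic_profile i _ _ perm_s); rewrite prof_s.
case: (sort size_le s) => [|u [|v r]] /=; first by lia.
  by move=> _ /andP[-> _]; rewrite addn0 eqxx.
move=> prof_uvr /and3P[opt_u opt_v opt_r] sorted_uvr size_r.
have sorted_sizes : sorted leq (map leaves [:: u, v & r]) by rewrite sorted_map.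
have opt_uv : optimal (Node u v).
  rewrite /optimal /= (cmin_merge_profile _ _ _ _ prof_uvr) /cmin_split.
  by rewrite -(eqP opt_u) -(eqP opt_v).
have := IH (Node u v :: r) _ _ _ (dyadic_profile_merge _ _ _ _ sorted_sizes prof_uvr).
rewrite /= opt_uv opt_r addnA; apply => //.
by move: size_s; rewrite -size_r !ltnS.
Qed.

Lemma gfb_spec n : 0 < n -> optimal (gfb n) && (leaves (gfb n) == n).
Proof.
move=> n_gt0; have := @gfb_loop_spec n (nseq n Leaf) 0.
rewrite size_nseq map_nseq sumn_nseq mul1n; apply; first lia.
  by rewrite all_nseq orbT.
by rewrite /dyadic_profile all_nseq count_nseq mul0n orbT.
Qed.

Theorem theorem6 (n k j : nat) (Ta Tb : tree) :
  2 ^ (k - 1) < n < 2 ^ k ->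
  (let q := 2 ^ (k - 2) in
   [/\ 2 ^ (k - 1) < n < 3 * q, 1 <= j <= q - 1,
       leaves Ta = n - q + j & leaves Tb = q - j]
   \/ [/\ n = 3 * q, 1 <= j <= q - 1,
          leaves Ta = 2 ^ (k - 1) + j & leaves Tb = q - j]
   \/ [/\ 3 * q < n < 2 ^ k, 1 <= j <= n - 2 ^ (k - 1) - 1,
          leaves Ta = 2 ^ (k - 1) + j & leaves Tb = n - 2 ^ (k - 1) - j]) ->
  is_min_colless n (colless (gfb n)) /\
  colless (gfb n) < colless (Node Ta Tb).
Proof.
move=> n_range rival.
have /andP[/eqP colless_gfb /eqP leaves_gfb] := gfb_spec n ltac:(lia).
rewrite leaves_gfb in colless_gfb; rewrite colless_gfb.
split.
  split; first by exists (gfb n).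
  by move=> t <-; apply: colless_ge_cmin.
have := colless_ge_cmin Ta; have := colless_ge_cmin Tb.
suff : cmin n < cmin_split (leaves Ta) (leaves Tb) by rewrite /cmin_split /=; lia.
case: k n_range rival => [|[|k]] n_range rival.
- by rewrite sub0n expn0 in n_range; lia.
- by rewrite subnn expn0 expn1 in n_range; lia.
rewrite !subSS !subn0 /= in n_range rival.
have e1 : 2 ^ k.+1 = 2 * 2 ^ k := expnS 2 k.
have sum_n : leaves Ta + leaves Tb = n by case: rival => [[]|[[]|[]]]; lia.
rewrite -sum_n; apply: (cmin_lt_split k.+1); rewrite ?leaves_gt0 //; first lia.
by rewrite /upper_half; case: rival => [[]|[[]|[]]]; lia.
Qed.
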